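(* Let $p\ge 2$ and let $\mathbb{F}_p$ be a binary floating-point format with $p$-bit significands and unit roundoff $u=2^{-p}$. Let $t\ge 1$ and $s_A,s_B\ge 1$ be integers. Let $A\in\mathbb{F}_p^{m\times k}$ and $B\in\mathbb{F}_p^{k\times n}$ have all entries nonzero. Define the scale factors $\alpha\in\mathbb{R}^m$, $\beta\in\mathbb{R}^n$ and the integer slices $A_{(\ell)}$ ($1\le \ell\le s_A$) and $B^{(h)}$ ($1\le h\le s_B$) as in the context, and put $$\tilde C=\alpha\beta^T\circ\sum_{\ell=1}^{s_A}\sum_{h=1}^{s_B}2^{-(\ell+h)t}A_{(\ell)}B^{(h)} .$$ Suppose $\hat C$ is computed as follows: each integer product $A_{(\ell)}B^{(h)}$ is computed exactly, converted exactly to $\mathbb{F}_p$ and scaled exactly by $2^{-(\ell+h)t}$ and by $\alpha\beta^T$ (entrywise), and then the resulting $\psi=s_As_B$ matrices are added entrywise in floating-point arithmetic (in any order) obeying the standard model $\mathrm{fl}(x+y)=(x+y)(1+\delta)$, $|\delta|\le u$, with no overflow or underflow, and $\psi u<1$. Then, entrywise, $$|\hat C-AB|\le\bigl(\zeta_{A,B}+\gamma_{\psi-1}(1+\zeta_{A,B})\bigr)\,|A|\,|B|,$$ where $\zeta_{A,B}=2^{-s_At}\kappa_A+2^{-s_Bt}\kappa_B+2^{-(s_A+s_B)t}\kappa_A\kappa_B$ and $\gamma_j=ju/(1-ju)$.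
   Context: Absolute values of matrices and inequalities between matrices are entrywise; $\circ$ is the Hadamard (entrywise) product. For $x\in\mathbb{R}$, $[x]$ denotes truncation toward zero ($\lfloor x\rfloor$ if $x\ge0$, $\lceil x\rceil$ if $x<0$). Scale factors: $\alpha_i$ is the smallest power of two strictly larger than $M_i=\max_{1\le j\le k}|a_{ij}|$ (i.e. $\alpha_i=2^{\lfloor\log_2 M_i\rfloor+1}$), and $\beta_j$ is the smallest power of two strictly larger than $N_j=\max_{1\le i\le k}|b_{ij}|$. Slices: $A_{(\ell)}=\bigl[2^{\ell t}\bigl(\mathrm{diag}(\alpha)^{-1}A-\sum_{r=1}^{\ell-1}2^{-rt}A_{(r)}\bigr)\bigr]$ for $\ell=1,\dots,s_A$, and $B^{(h)}=\bigl[2^{ht}\bigl(B\,\mathrm{diag}(\beta)^{-1}-\sum_{r=1}^{h-1}2^{-rt}B^{(r)}\bigr)\bigr]$ for $h=1,\dots,s_B$ (integer matrices, applied entrywise). Scaling measures: $\kappa_A=2\max_i\frac{\max_j|a_{ij}|}{\min_j|a_{ij}|}$ and $\kappa_B=2\max_j\frac{\max_i|b_{ij}|}{\min_i|b_{ij}|}$. *)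

From HB Require Import structures.
From mathcomp Require Import all_boot all_order all_algebra.
From mathcomp Require Import reals exp.
Set Implicit Arguments. Unset Strict Implicit. Unset Printing Implicit Defensive.
Import Order.TTheory GRing.Theory Num.Theory.
Local Open Scope ring_scope.

Section Defs.
Variable R : realType.

(* binary floating-point format with p-bit significands, unbounded exponent
   (no overflow/underflow) *)
Definition is_fp (p : nat) (x : R) : Prop :=
  exists (M e : int), x = M%:~R * (2 : R) ^ e /\ (`|M| < 2 ^+ p)%R.

Definition trunc0 (x : R) : int :=
  if 0 <= x then Num.floor x else Num.ceil x.

Definition pow2above (M : R) : R :=
  (2 : R) ^ (Num.floor (ln M / ln 2) + 1).

Fixpoint slices (t : nat) (x : R) (l : nat) : seq int :=
  match l with
  | 0 => [::]
  | l'.+1 =>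
      let s := slices t x l' in
      rcons s (trunc0 ((2 : R) ^+ (l'.+1 * t) *
        (x - \sum_(r < l') (2 : R) ^- (r.+1 * t) * (nth 0 s r)%:~R)))
  end.

(* the l-th slice (l >= 1) *)
Definition slice (t : nat) (x : R) (l : nat) : int := nth 0 (slices t x l) l.-1.

Variables m k n : nat.

Definition rowmaxA (A : 'M[R]_(m, k)) (i : 'I_m) : R :=
  \big[Num.max/0]_(j < k) `|A i j|.
Definition rowminA (A : 'M[R]_(m, k)) (i : 'I_m) : R :=
  \big[Num.min/rowmaxA A i]_(j < k) `|A i j|.
Definition colmaxB (B : 'M[R]_(k, n)) (j : 'I_n) : R :=
  \big[Num.max/0]_(i < k) `|B i j|.
Definition colminB (B : 'M[R]_(k, n)) (j : 'I_n) : R :=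
  \big[Num.min/colmaxB B j]_(i < k) `|B i j|.

Definition alphaA (A : 'M[R]_(m, k)) (i : 'I_m) : R := pow2above (rowmaxA A i).
Definition betaB (B : 'M[R]_(k, n)) (j : 'I_n) : R := pow2above (colmaxB B j).

Definition kappaA (A : 'M[R]_(m, k)) : R :=
  2 * \big[Num.max/0]_(i < m) (rowmaxA A i / rowminA A i).
Definition kappaB (B : 'M[R]_(k, n)) : R :=
  2 * \big[Num.max/0]_(j < n) (colmaxB B j / colminB B j).

(* A_(l) = slices of diag(alpha)^{-1} A ; B^(h) = slices of B diag(beta)^{-1} *)
Definition sliceA (t : nat) (A : 'M[R]_(m, k)) (l : nat) : 'M[R]_(m, k) :=
  \matrix_(i, j) (slice t (A i j / alphaA A i) l)%:~R.
Definition sliceB (t : nat) (B : 'M[R]_(k, n)) (h : nat) : 'M[R]_(k, n) :=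
  \matrix_(i, j) (slice t (B i j / betaB B j) h)%:~R.

(* the psi = sA*sB exactly computed, exactly scaled terms for entry (i,j) *)
Definition terms (t sA sB : nat) (A : 'M[R]_(m, k)) (B : 'M[R]_(k, n))
    (i : 'I_m) (j : 'I_n) : seq R :=
  [seq alphaA A i * betaB B j * (2 : R) ^- ((l + h) * t)
         * (sliceA t A l *m sliceB t B h) i j
     | l <- iota 1 sA, h <- iota 1 sB].

End Defs.

(* fl_sum u xs r : r is a possible result of summing the terms xs in
   floating-point arithmetic, in any order (any summation tree over any
   permutation), each addition satisfying fl(x+y) = (x+y)(1+d), |d| <= u. *)
Inductive fl_sum {R : realType} (u : R) : seq R -> R -> Prop :=
| fl_sum_leaf x : fl_sum u [:: x] x
| fl_sum_node xs ys a b d :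
    fl_sum u xs a -> fl_sum u ys b -> `|d| <= u ->
    fl_sum u (xs ++ ys) ((a + b) * (1 + d))
| fl_sum_perm xs ys r : perm_eq xs ys -> fl_sum u xs r -> fl_sum u ys r.

Definition gamma {R : realType} (u : R) (j : nat) : R :=
  (j%:R * u) / (1 - j%:R * u).

From Pilot Require Import Defs.
From HB Require Import structures.
From mathcomp Require Import all_boot all_order all_algebra.
From mathcomp Require Import reals exp.
From mathcomp Require Import ring lra zify.
Import Order.TTheory GRing.Theory Num.Theory.
Local Open Scope ring_scope.

(* Slicing a real x into t-bit pieces loses nothing in norm: the weighted
   norms of the slices plus the norm of the residual add up to |x|, and the
   residual after s slices is at most 2^-(s t).  After scaling back by
   alpha_i <= 2 max_j |a_ij| <= kappa_A |a_iq|, every entry a of A is thus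
   approximated by its sliced value with relative error 2^-(sA t) kappa_A,
   and likewise for B; the product of two such approximations has relative
   error zeta.  The exact sum of the psi terms is that product summed over
   q, and the sum of their moduli is at most (|A||B|)_ij, so the classical
   gamma_(psi-1) bound for recursive summation finishes the proof. *)

Section Slices.
Context {R : realType} (t : nat).
Implicit Types (x z : R) (l : nat).

Lemma trunc0_residual z :
  `|(Defs.trunc0 z)%:~R| + `|z - (Defs.trunc0 z)%:~R| = `|z| /\
  `|z - (Defs.trunc0 z)%:~R| <= 1.
Proof.
rewrite /Defs.trunc0; case: ifP => z0.
- have /andP[_ z_lt] := floor_itv z; rewrite intrD in z_lt.
  have f0 : (0 : R) <= (Num.floor z)%:~R by rewrite ler0z floor_ge0.
  rewrite (ger0_norm f0) (ger0_norm z0) ger0_norm ?subr_ge0 ?floor_le //.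
  by split; [ring | lra].
- have z_lt0 : z < 0 by rewrite ltNge z0.
  have /andP[z_gt _] := ceil_itv z; rewrite intrB in z_gt.
  have c0 : (Num.ceil z)%:~R <= (0 : R) by rewrite lerz0 ceil_le0 ltW.
  rewrite (ler0_norm c0) (ltr0_norm z_lt0) ler0_norm ?subr_le0 ?ceil_ge //.
  by split; [ring | lra].
Qed.

Definition slice_sum x l :=
  \sum_(1 <= r < l.+1) (2 : R) ^- (r * t) * (slice t x r)%:~R.
Definition slice_norm_sum x l :=
  \sum_(1 <= r < l.+1) (2 : R) ^- (r * t) * `|(slice t x r)%:~R|.

Lemma size_slices x l : size (slices t x l) = l.
Proof. by elim: l => //= l IH; rewrite size_rcons IH. Qed.

Lemma nth_slices x l r : (r < l)%N -> nth 0 (slices t x l) r = slice t x r.+1.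
Proof.
elim: l => // l IH; rewrite ltnS leq_eqVlt => /orP[/eqP -> //|lt_rl].
by rewrite /= nth_rcons size_slices lt_rl IH.
Qed.

Lemma sliceS x l :
  slice t x l.+1 = Defs.trunc0 ((2 : R) ^+ (l.+1 * t) * (x - slice_sum x l)).
Proof.
rewrite /slice /= nth_rcons size_slices ltnn eqxx /slice_sum big_add1 /= big_mkord.
by congr (Defs.trunc0 (_ * (_ - _))); apply: eq_bigr => r _; rewrite nth_slices.
Qed.

Lemma slice_residualS x l (z := (2 : R) ^+ (l.+1 * t) * (x - slice_sum x l)) :
  x - slice_sum x l.+1 = (2 : R) ^- (l.+1 * t) * (z - (Defs.trunc0 z)%:~R).
Proof.
have w_inv : (2 : R) ^- (l.+1 * t) * 2 ^+ (l.+1 * t) = 1.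
  by rewrite mulVf // expf_neq0 // pnatr_eq0.
rewrite /slice_sum big_nat_recr //= -/(slice_sum x l) sliceS /z.
set q := ((Defs.trunc0 _)%:~R : R).
by rewrite [in RHS]mulrBr [in RHS]mulrA w_inv; ring.
Qed.

Lemma slice_norm_sum_residual x l :
  slice_norm_sum x l + `|x - slice_sum x l| = `|x|.
Proof.
elim: l => [|l IH]; first by rewrite /slice_norm_sum /slice_sum !big_geq // subr0 add0r.
set w := (2 : R) ^- (l.+1 * t).
have w0 : 0 < w by rewrite invr_gt0 exprn_gt0.
set z := (2 : R) ^+ (l.+1 * t) * (x - slice_sum x l).
have residual_z : `|x - slice_sum x l| = w * `|z|.
  rewrite normrM (gtr0_norm (exprn_gt0 _ _)) // mulrA mulVf ?mul1r //.
  by rewrite expf_neq0 // pnatr_eq0.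
have [norm_z _] := trunc0_residual z.
rewrite slice_residualS -/w -/z normrM (gtr0_norm w0) /slice_norm_sum big_nat_recr //=.
by rewrite -/(slice_norm_sum x l) -{}IH residual_z -norm_z sliceS -/z -/w mulrDr addrA.
Qed.

Lemma slice_residual_le x l : (0 < l)%N -> `|x - slice_sum x l| <= (2 : R) ^- (l * t).
Proof.
case: l => // l _; rewrite slice_residualS normrM gtr0_norm ?invr_gt0 ?exprn_gt0 //.
rewrite ler_piMr ?invr_ge0 ?exprn_ge0 //.
by have [_] := trunc0_residual ((2 : R) ^+ (l.+1 * t) * (x - slice_sum x l)).
Qed.

Lemma slice_norm_sum_ge0 x l : 0 <= slice_norm_sum x l.
Proof. by rewrite sumr_ge0 // => r _; rewrite mulr_ge0 ?invr_ge0 ?exprn_ge0. Qed.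

Lemma scaled_slice_residual_le al a l : 0 < al -> (0 < l)%N ->
  `|a - al * slice_sum (a / al) l| <= al * (2 : R) ^- (l * t).
Proof.
move=> al0 l0; rewrite -[a in a - _](divfK (lt0r_neq0 al0)) mulrC -mulrBr.
by rewrite normrM (gtr0_norm al0) ler_pM2l // slice_residual_le.
Qed.

Lemma scaled_slice_norm_sum_le al a l : 0 < al ->
  al * slice_norm_sum (a / al) l <= `|a|.
Proof.
move=> al0; have : slice_norm_sum (a / al) l <= `|a| / al.
  by rewrite -[al in `|a| / al]gtr0_norm // -normf_div -(slice_norm_sum_residual _ l) lerDl.
by rewrite ler_pdivlMr // mulrC.
Qed.

End Slices.

Section ScaleFactors.
Context {R : realType}.

Lemma lnXz (x : R) (z : int) : 0 < x -> ln (x ^ z) = z%:~R * ln x.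
Proof.
move=> x0; case: z => n; first by rewrite lnXn // mulr_natl.
rewrite NegzE -invr_expz lnV ?posrE ?exprz_gt0 //.
by rewrite (_ : x ^ n.+1%:Z = x ^+ n.+1) // lnXn // mulrNz mulNr mulr_natl.
Qed.

Lemma pow2above_gt0 (M : R) : 0 < pow2above M.
Proof. by rewrite exprz_gt0. Qed.

Lemma pow2above_le {M : R} : 0 < M -> pow2above M <= 2 * M.
Proof.
move=> M0; have ln2_gt0 : 0 < ln (2 : R) by rewrite ln_gt0 // ltr1n.
rewrite /pow2above expfzDr ?pnatr_eq0 // expr1z mulrC ler_pM2l //.
rewrite -ler_ln ?posrE ?exprz_gt0 // lnXz // -ler_pdivlMr //.
exact: floor_le.
Qed.

Lemma bigmax_le_ratio_bigmin {k} (f : 'I_k -> R) q : (forall j, 0 < f j) ->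
  \big[Num.max/0]_j f j <=
    \big[Num.max/0]_j f j / \big[Num.min/(\big[Num.max/0]_j f j)]_j f j * f q.
Proof.
move=> f_gt0; set M := \big[Num.max/0]_j f j.
have M0 : 0 < M by apply: lt_le_trans (f_gt0 q) _; apply: le_bigmax.
have mn0 : 0 < \big[Num.min/M]_j f j.
  by elim/big_ind: _ => // a b a0 b0; rewrite lt_min a0.
rewrite -mulrA ler_pMr // ler_pdivlMl // mulr1; exact: bigmin_le.
Qed.

Context {m k n : nat}.

Lemma kappaA_ge0 (A : 'M[R]_(m, k)) : 0 <= kappaA A.
Proof. by rewrite mulr_ge0 // bigmax_ge_id. Qed.

Lemma kappaB_ge0 (B : 'M[R]_(k, n)) : 0 <= kappaB B.
Proof. by rewrite mulr_ge0 // bigmax_ge_id. Qed.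

Lemma alphaA_le (A : 'M[R]_(m, k)) i q : (forall j, A i j != 0) ->
  alphaA A i <= kappaA A * `|A i q|.
Proof.
move=> nzA; have absA_gt0 j : 0 < `|A i j| by rewrite normr_gt0.
have M0 : 0 < rowmaxA A i by apply: lt_le_trans (absA_gt0 q) _; apply: le_bigmax.
rewrite /alphaA; apply: le_trans (pow2above_le M0) _.
apply: le_trans (ler_wpM2l _ (bigmax_le_ratio_bigmin _ q absA_gt0)) _ => //.
rewrite mulrA ler_wpM2r // ler_pM2l //; exact: le_bigmax.
Qed.

Lemma betaB_le (B : 'M[R]_(k, n)) j q : (forall i, B i j != 0) ->
  betaB B j <= kappaB B * `|B q j|.
Proof.
move=> nzB; have absB_gt0 i : 0 < `|B i j| by rewrite normr_gt0.
have M0 : 0 < colmaxB B j by apply: lt_le_trans (absB_gt0 q) _; apply: le_bigmax.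
rewrite /betaB; apply: le_trans (pow2above_le M0) _.
apply: le_trans (ler_wpM2l _ (bigmax_le_ratio_bigmin _ q absB_gt0)) _ => //.
rewrite mulrA ler_wpM2r // ler_pM2l //; exact: le_bigmax.
Qed.

End ScaleFactors.

Section FloatingSum.
Context {R : realType} {u : R}.
Hypothesis u_ge0 : 0 <= u.

Lemma gammaE {j} : j%:R * u < 1 -> gamma u j = (1 - j%:R * u)^-1 - 1.
Proof. by move=> ju_lt1; rewrite /gamma; field; rewrite subr_eq0 gt_eqF. Qed.

Lemma gamma_ge0 {j} : j%:R * u < 1 -> 0 <= gamma u j.
Proof. by move=> ju_lt1; rewrite /gamma divr_ge0 ?mulr_ge0 // subr_ge0 ltW. Qed.

Lemma gamma_le {j j'} : (j <= j')%N -> j'%:R * u < 1 -> gamma u j <= gamma u j'.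
Proof.
move=> le_jj' j'u_lt1; have ju_le : j%:R * u <= j'%:R * u by rewrite ler_wpM2r // ler_nat.
rewrite !gammaE //; last exact: le_lt_trans j'u_lt1.
by rewrite lerD2r lef_pV2 ?posrE; lra.
Qed.

Lemma gamma_step j : j.+1%:R * u < 1 -> gamma u j + u * (1 + gamma u j) <= gamma u j.+1.
Proof.
rewrite -addn1 natrD => ju_lt1; have j_ge0 : (0 : R) <= j%:R by [].
have ju_lt1' : j%:R * u < 1 by nra.
rewrite !gammaE ?natrD //.
have -> : (1 - j%:R * u)^-1 - 1 + u * (1 + ((1 - j%:R * u)^-1 - 1)) =
          (1 + u) / (1 - j%:R * u) - 1 by field; lra.
rewrite lerD2r ler_pdivrMr ?subr_gt0 // mulrC ler_pdivlMr; last by lra.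
have : 0 <= (j%:R + 1) * u * u by rewrite !mulr_ge0 // addr_ge0.
nra.
Qed.

Lemma gamma_add_step {n N} : (0 < n)%N -> (n <= N)%N -> N%:R * u < 1 ->
  gamma u n.-1 + u * (1 + gamma u n.-1) <= gamma u N.
Proof.
move=> n_gt0 le_nN Nu_lt1; have nu_lt1 : n%:R * u < 1.
  by apply: le_lt_trans Nu_lt1; rewrite ler_wpM2r // ler_nat.
by apply: le_trans (gamma_le le_nN Nu_lt1); rewrite -{3}(prednK n_gt0) gamma_step ?prednK.
Qed.

Lemma fl_add_err (g g1 g2 X Y X' Y' a b d : R) :
  `|a - X| <= g1 * X' -> `|b - Y| <= g2 * Y' -> `|X| <= X' -> `|Y| <= Y' ->
  `|d| <= u -> g1 + u * (1 + g1) <= g -> g2 + u * (1 + g2) <= g ->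
  `|(a + b) * (1 + d) - (X + Y)| <= g * (X' + Y').
Proof.
move=> errX errY X_le Y_le d_le g1_le g2_le.
have a_le : `|a| <= (1 + g1) * X'.
  by have := ler_normD (a - X) X; rewrite subrK; lra.
have b_le : `|b| <= (1 + g2) * Y'.
  by have := ler_normD (b - Y) Y; rewrite subrK; lra.
have d_err : `|d * (a + b)| <= u * ((1 + g1) * X' + (1 + g2) * Y').
  by rewrite normrM ler_pM // (le_trans (ler_normD _ _)) ?lerD.
have -> : (a + b) * (1 + d) - (X + Y) = (a - X) + (b - Y) + d * (a + b) by ring.
have X'_ge0 : 0 <= X' := le_trans (normr_ge0 _) X_le.
have Y'_ge0 : 0 <= Y' := le_trans (normr_ge0 _) Y_le.
have := ler_wpM2r X'_ge0 g1_le; have := ler_wpM2r Y'_ge0 g2_le.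
have := ler_normD (a - X + (b - Y)) (d * (a + b)); have := ler_normD (a - X) (b - Y).
nra.
Qed.

Lemma fl_sum_size {xs c} : fl_sum u xs c -> (0 < size xs)%N.
Proof.
elim=> // [xs' ys a b d _ xs'_gt0 _ _ _ | xs' ys r perm_xy _ ].
  by rewrite size_cat addn_gt0 xs'_gt0.
by rewrite -(perm_size perm_xy).
Qed.

Lemma fl_sum_err {xs c} : fl_sum u xs c -> (size xs).-1%:R * u < 1 ->
  `|c - \sum_(x <- xs) x| <= gamma u (size xs).-1 * \sum_(x <- xs) `|x|.
Proof.
elim=> {xs c} [x _ | xs ys a b d Ha IHa Hb IHb d_le | xs ys r perm_xy _ IH].
- by rewrite !big_seq1 subrr normr0 mulr_ge0 // gamma_ge0 // mul0r.
- rewrite size_cat !big_cat /=; set N := (size xs + size ys).-1 => Nu_lt1.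
  have [xs_gt0 ys_gt0] := (fl_sum_size Ha, fl_sum_size Hb).
  have le_xs : (size xs <= N)%N by rewrite /N; lia.
  have le_ys : (size ys <= N)%N by rewrite /N; lia.
  have small j : (j <= N)%N -> j%:R * u < 1.
    by move=> le_jN; apply: le_lt_trans Nu_lt1; rewrite ler_wpM2r // ler_nat.
  apply: fl_add_err (ler_norm_sum _ _ _) (ler_norm_sum _ _ _) d_le
    (gamma_add_step xs_gt0 le_xs Nu_lt1) (gamma_add_step ys_gt0 le_ys Nu_lt1).
  + by apply/IHa/small; apply: leq_trans le_xs; apply: leq_pred.
  + by apply/IHb/small; apply: leq_trans le_ys; apply: leq_pred.
- by rewrite -!(perm_big _ perm_xy) -(perm_size perm_xy).
Qed.

End FloatingSum.

Lemma exchange_sum_mul {R : realType} (I J : Type) (r1 : seq I) (r2 : seq J) k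
    (F : I -> 'I_k -> R) (G : J -> 'I_k -> R) :
  \sum_(l <- r1) \sum_(h <- r2) \sum_q F l q * G h q =
  \sum_q (\sum_(l <- r1) F l q) * (\sum_(h <- r2) G h q).
Proof.
symmetry; under eq_bigr do rewrite big_distrlr /=.
by rewrite exchange_big; apply: eq_bigr => l _; rewrite exchange_big.
Qed.

Lemma mul_approx_err {R : realType} {a b a' b' ea eb : R} :
  `|a - a'| <= ea * `|a| -> `|b - b'| <= eb * `|b| -> 0 <= ea -> 0 <= eb ->
  `|a' * b' - a * b| <= (ea + eb + ea * eb) * (`|a| * `|b|).
Proof.
move=> err_a err_b ea0 eb0.
have -> : a' * b' - a * b = - ((a - a') * b) - a * (b - b') + (a - a') * (b - b').
  by ring.
apply: le_trans (ler_normD _ _) _; apply: le_trans (lerD (ler_normB _ _) (lexx _)) _.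
rewrite normrN !normrM.
have := ler_wpM2r (normr_ge0 b) err_a; have := ler_wpM2l (normr_ge0 a) err_b.
have := ler_pM (normr_ge0 _) (normr_ge0 _) err_a err_b.
have := normr_ge0 a; have := normr_ge0 b; nra.
Qed.

Section SlicedProduct.
Context {R : realType} {m k n : nat} (t sA sB : nat).
Variables (A : 'M[R]_(m, k)) (B : 'M[R]_(k, n)) (i : 'I_m) (j : 'I_n).

Let Ahat q := alphaA A i * slice_sum t (A i q / alphaA A i) sA.
Let Bhat q := betaB B j * slice_sum t (B q j / betaB B j) sB.

Lemma terms_entry l h :
  alphaA A i * betaB B j * (2 : R) ^- ((l + h) * t) * (sliceA t A l *m sliceB t B h) i j =
  alphaA A i * betaB B j * \sum_q
    ((2 : R) ^- (l * t) * (slice t (A i q / alphaA A i) l)%:~R) *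
    ((2 : R) ^- (h * t) * (slice t (B q j / betaB B j) h)%:~R).
Proof.
rewrite mxE mulnDl exprD invfM -mulrA mulr_sumr; congr (_ * _).
by apply: eq_bigr => q _; rewrite !mxE; ring.
Qed.

Lemma terms_sum : \sum_(z <- terms t sA sB A B i j) z = \sum_q Ahat q * Bhat q.
Proof.
rewrite big_allpairs_dep /=.
under eq_bigr do under eq_bigr do rewrite terms_entry.
under eq_bigr do rewrite -big_distrr /=.
rewrite -big_distrr /= exchange_sum_mul big_distrr /=; apply: eq_bigr => q _.
by rewrite /Ahat /Bhat /slice_sum /index_iota !subSS !subn0; ring.
Qed.

Lemma terms_norm_sum_le :
  \sum_(z <- terms t sA sB A B i j) `|z| <= \sum_q `|A i q| * `|B q j|.
Proof.
have al0 : 0 < alphaA A i := pow2above_gt0 _.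
have be0 : 0 < betaB B j := pow2above_gt0 _.
have albe0 : 0 <= alphaA A i * betaB B j by rewrite mulr_ge0 ?ltW.
have norm_sumE s (x : R) :
    \sum_(l <- iota 1 s) `|(2 : R) ^- (l * t) * (slice t x l)%:~R| = slice_norm_sum t x s.
  rewrite /slice_norm_sum /index_iota subSS subn0; apply: eq_bigr => l _.
  by rewrite normrM ger0_norm // invr_ge0 exprn_ge0.
rewrite big_allpairs_dep /=.
under eq_bigr do under eq_bigr do rewrite terms_entry normrM (ger0_norm albe0).
apply: le_trans (_ : _ <= \sum_(l <- iota 1 sA) \sum_(h <- iota 1 sB)
    alphaA A i * betaB B j * \sum_q
      `|(2 : R) ^- (l * t) * (slice t (A i q / alphaA A i) l)%:~R| *
      `|(2 : R) ^- (h * t) * (slice t (B q j / betaB B j) h)%:~R|) _.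
  do 2![apply: ler_sum => ? _]; apply: ler_wpM2l => //.
  by apply: le_trans (ler_norm_sum _ _ _) _; under eq_bigr do rewrite normrM.
set P := (X in _ <= X); under eq_bigr do rewrite -big_distrr /=.
rewrite -big_distrr /= exchange_sum_mul big_distrr /=; apply: ler_sum => q _.
rewrite mulrACA !norm_sumE; apply: ler_pM.
- exact: mulr_ge0 (ltW al0) (slice_norm_sum_ge0 _ _ _).
- exact: mulr_ge0 (ltW be0) (slice_norm_sum_ge0 _ _ _).
- exact: scaled_slice_norm_sum_le.
- exact: scaled_slice_norm_sum_le.
Qed.

Lemma sliced_entryA_err q : (forall q', A i q' != 0) -> (0 < sA)%N ->
  `|A i q - Ahat q| <= (2 : R) ^- (sA * t) * kappaA A * `|A i q|.
Proof.
move=> nzA sA_gt0.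
apply: le_trans (scaled_slice_residual_le t _ _ _ (pow2above_gt0 _) sA_gt0) _.
rewrite mulrC -mulrA ler_wpM2l ?invr_ge0 ?exprn_ge0 //; exact: alphaA_le.
Qed.

Lemma sliced_entryB_err q : (forall q', B q' j != 0) -> (0 < sB)%N ->
  `|B q j - Bhat q| <= (2 : R) ^- (sB * t) * kappaB B * `|B q j|.
Proof.
move=> nzB sB_gt0.
apply: le_trans (scaled_slice_residual_le t _ _ _ (pow2above_gt0 _) sB_gt0) _.
rewrite mulrC -mulrA ler_wpM2l ?invr_ge0 ?exprn_ge0 //; exact: betaB_le.
Qed.

Lemma terms_sum_err : (forall q, A i q != 0) -> (forall q, B q j != 0) ->
  (0 < sA)%N -> (0 < sB)%N ->
  `|\sum_(z <- terms t sA sB A B i j) z - (A *m B) i j| <=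
    ((2 : R) ^- (sA * t) * kappaA A + (2 : R) ^- (sB * t) * kappaB B
     + (2 : R) ^- ((sA + sB) * t) * kappaA A * kappaB B) *
    \sum_q `|A i q| * `|B q j|.
Proof.
move=> nzA nzB sA_gt0 sB_gt0; rewrite terms_sum mxE -sumrB mulr_sumr.
apply: le_trans (ler_norm_sum _ _ _) _; apply: ler_sum => q _.
have eA0 : 0 <= (2 : R) ^- (sA * t) * kappaA A.
  by rewrite mulr_ge0 ?kappaA_ge0 ?invr_ge0 ?exprn_ge0.
have eB0 : 0 <= (2 : R) ^- (sB * t) * kappaB B.
  by rewrite mulr_ge0 ?kappaB_ge0 ?invr_ge0 ?exprn_ge0.
have := mul_approx_err (sliced_entryA_err q nzA sA_gt0)
                       (sliced_entryB_err q nzB sB_gt0) eA0 eB0.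
by rewrite mulnDl exprD invfM; congr (_ <= _ * _); ring.
Qed.

End SlicedProduct.

Theorem mainTheorem1 (R : realType) (p t sA sB m k n : nat)
  (A : 'M[R]_(m, k)) (B : 'M[R]_(k, n)) (u : R) :
  (2 <= p)%N -> (1 <= t)%N -> (1 <= sA)%N -> (1 <= sB)%N ->
  u = (2 : R) ^- p ->
  (forall i j, is_fp p (A i j)) -> (forall i j, is_fp p (B i j)) ->
  (forall i j, A i j != 0) -> (forall i j, B i j != 0) ->
  (sA * sB)%:R * u < 1 ->
  let psi := (sA * sB)%N in
  let zeta := (2 : R) ^- (sA * t) * kappaA A + (2 : R) ^- (sB * t) * kappaB B
              + (2 : R) ^- ((sA + sB) * t) * kappaA A * kappaB B in
  forall (i : 'I_m) (j : 'I_n) (c : R),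
    fl_sum u (terms t sA sB A B i j) c ->
    `|c - (A *m B) i j| <=
      (zeta + gamma u (psi - 1) * (1 + zeta)) *
      ((map_mx (fun x => `|x|) A) *m (map_mx (fun x => `|x|) B)) i j.
Proof.
move=> _ _ sA_gt0 sB_gt0 u_def _ _ nzA nzB psi_u_lt1 psi zeta i j c fl_c.
have u_ge0 : 0 <= u by rewrite u_def invr_ge0 exprn_ge0.
have -> : ((map_mx (fun x => `|x|) A) *m (map_mx (fun x => `|x|) B)) i j =
          \sum_q `|A i q| * `|B q j| by rewrite mxE; apply: eq_bigr => q _; rewrite !mxE.
set P := \sum_q _; set S := \sum_(z <- terms t sA sB A B i j) z.
have size_terms : size (terms t sA sB A B i j) = psi by rewrite size_allpairs !size_iota.
have psi_small : psi.-1%:R * u < 1.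
  by apply: le_lt_trans psi_u_lt1; rewrite ler_wpM2r // ler_nat leq_pred.
have gamma0 := gamma_ge0 u_ge0 psi_small.
have fl_err : `|c - S| <= gamma u psi.-1 * P.
  apply: le_trans (ler_wpM2l gamma0 (terms_norm_sum_le t sA sB A B i j)).
  by rewrite -size_terms; apply: (fl_sum_err u_ge0 fl_c); rewrite size_terms.
have slice_err : `|S - (A *m B) i j| <= zeta * P :=
  terms_sum_err t sA sB A B i j (nzA i) (nzB^~ j) sA_gt0 sB_gt0.
have zeta_ge0 : 0 <= zeta.
  have w_ge0 e : 0 <= (2 : R) ^- e by rewrite invr_ge0 exprn_ge0.
  have [kA kB] := (kappaA_ge0 A, kappaB_ge0 B).
  exact: addr_ge0 (addr_ge0 (mulr_ge0 (w_ge0 _) kA) (mulr_ge0 (w_ge0 _) kB))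
                  (mulr_ge0 (mulr_ge0 (w_ge0 _) kA) kB).
have P_ge0 : 0 <= P by rewrite sumr_ge0 // => q _; rewrite mulr_ge0.
rewrite subn1; apply: le_trans (ler_distD S _ _) _.
have gzP_ge0 := mulr_ge0 (mulr_ge0 gamma0 zeta_ge0) P_ge0.
have -> : (zeta + gamma u psi.-1 * (1 + zeta)) * P =
          gamma u psi.-1 * P + zeta * P + gamma u psi.-1 * zeta * P by ring.
rewrite -addrA (lerD fl_err) //; apply: le_trans slice_err _; by rewrite lerDl.
Qed.
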